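(* Let ${\bf c}=(c_1,\ldots,c_{n+1})$ be a tuple of nonnegative integers, let $\Pi_{n+1}({\bf c})$ be the graph on $[n+2]$ consisting of the path $1\to2\to\cdots\to n+2$ together with $c_i$ additional edges $(i,n+2)$ for each $i=1,\ldots,n+1$, and let ${\bf a}=(a_1,\ldots,a_{n+1},-\sum_i a_i)$ with $a_i\in\mathbb{Z}_{\ge0}$. Then the Ehrhart polynomial $t\mapsto\#\big(t\,\mathcal{F}_{\Pi_{n+1}({\bf c})}({\bf a})\cap\mathbb{Z}^{E}\big)=K_{\Pi_{n+1}({\bf c})}(t{\bf a})$ has positive coefficients.
   Context: $\mathcal{F}_H({\bf a})$ is the set of $f\in\mathbb{R}_{\ge0}^{E(H)}$ with outflow minus inflow at each vertex $k$ (other than the last) equal to $a_k$; $K_H({\bf a})$ is the number of its integer points, and $E=E(\Pi_{n+1}({\bf c}))$. *)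

From mathcomp Require Import all_boot all_order all_algebra.
Set Implicit Arguments. Unset Strict Implicit. Unset Printing Implicit Defensive.
Import Order.TTheory GRing.Theory Num.Theory.

(* Graph Pi_{n+1}(c) on vertices 0..n+1 (0-indexed version of [n+2]).
   Edges: path edges  inl i : i -> i+1   for i : 'I_(n+1),
          extra edges inr (existT i j) : i -> n+1  for i : 'I_(n+1), j : 'I_(c i)
          (so c i parallel copies of the edge (i, last vertex)). *)
Definition extra_edge (n : nat) (c : 'I_(n.+1) -> nat) : finType :=
  {i : 'I_(n.+1) & 'I_(c i)}.
Definition Pi_edge (n : nat) (c : 'I_(n.+1) -> nat) : finType :=
  ('I_(n.+1) + extra_edge c)%type.

(* Integer (nonnegative) flows on Pi_{n+1}(c) with netflow a_k at every
   vertex k other than the last one:  outflow(k) - inflow(k) = a k. *)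
Definition is_int_flow (n : nat) (c : 'I_(n.+1) -> nat) (a : 'I_(n.+1) -> nat)
    (f : {ffun Pi_edge c -> nat}) : Prop :=
  forall k : 'I_(n.+1),
    f (inl k) + \sum_(e : extra_edge c | tag e == k) f (inr e)
    = \sum_(e : 'I_(n.+1) | e.+1 == k :> nat) f (inl e) + a k.

Definition has_card (T : eqType) (P : T -> Prop) (N : nat) : Prop :=
  exists s : seq T, [/\ uniq s, (forall x, x \in s <-> P x) & size s = N].

Definition K_Pi (n : nat) (c : 'I_(n.+1) -> nat) (a : 'I_(n.+1) -> nat) (N : nat) : Prop :=
  has_card (@is_int_flow n c a) N.

From mathcomp Require Import all_boot all_order all_algebra.
From mathcomp Require Import zify.
Set Implicit Arguments. Unset Strict Implicit. Unset Printing Implicit Defensive.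
Import Order.TTheory GRing.Theory Num.Theory.

(* An integer flow on Pi_{n+1}(c) with netflow t*a is determined by the vectors
   y_i in N^{c_i} it carries on the extra edges leaving vertex i: conservation forces
   the path edge leaving i to carry t(a_1 + ... + a_i) - (|y_1| + ... + |y_i|), so the
   flows are the sequences (y_i) whose prefix sums stay below those of t*a.  There are
   multichoose c s = C(s + c - 1, s) vectors in N^c of total s, and the Vandermonde
   identity for multichoose shows, by induction over the vertices, that the number of
   such sequences on a tail of the graph entered with surplus b is
   sum_j Q_j(t) multichoose (j+1) b, with polynomials Q_j of degree at most top - j,
   nonnegative coefficients and Q_top = 1.  A first vertex with a_i = 0 changes nothing
   at surplus 0; at the first vertex with a_i > 0 the count becomes
   sum_j Q_j(t) multichoose (t a_i + 1) (c_i + j), and multichoose (t a + 1) d =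
   (t a + 1)...(t a + d)/d! has d + 1 positive coefficients, so the term j = top, of
   maximal degree, makes all coefficients positive. *)

Definition multichoose (x d : nat) : nat := 'C((x + d).-1, d).

Lemma multichoose_n0 x : multichoose x 0 = 1.
Proof. by rewrite /multichoose bin0. Qed.

Lemma multichoose_0S d : multichoose 0 d.+1 = 0.
Proof. by rewrite /multichoose bin_small. Qed.

Lemma multichoose_1n d : multichoose 1 d = 1.
Proof. by rewrite /multichoose add1n binn. Qed.

Lemma multichooseS x d :
  multichoose x.+1 d.+1 = multichoose x.+1 d + multichoose x d.+1.
Proof. by rewrite /multichoose !addSn !addnS binS addnC. Qed.

Lemma multichooseC x d : multichoose x.+1 d = multichoose d.+1 x.
Proof.
by rewrite /multichoose !addSn /= [d + x]addnC -(bin_sub (leq_addr d x)) addKn.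
Qed.

Lemma multichoose_fact x d : multichoose x d * d`! = \prod_(r < d) (x + r).
Proof.
elim: d => [|d IHd]; first by rewrite multichoose_n0 big_ord0.
rewrite factS mulnCA mulnA /multichoose addnS /= -mul_bin_diag.
by rewrite -mulnA -/(multichoose x d) IHd big_ord_recr /= mulnC.
Qed.

Lemma multichoose_Vandermonde p q m :
  \sum_(s < m.+1) multichoose p s * multichoose q (m - s) = multichoose (p + q) m.
Proof.
elim: q m => [|q IHq] m.
  rewrite big_ord_recr /= subnn multichoose_n0 muln1 addn0 big1 // => s _.
  by rewrite -subnSK // multichoose_0S muln0.
elim: m => [|m IHm]; first by rewrite big_ord_recr big_ord0 /= !multichoose_n0.
rewrite addnS multichooseS -addnS -IHm -IHq big_ord_recr /= subnn multichoose_n0.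
rewrite [X in _ = _ + X]big_ord_recr /= subnn multichoose_n0 addnA -big_split /=.
congr (_ + _); apply: eq_bigr => s _.
by rewrite subSn 1?multichooseS ?mulnDr // -ltnS.
Qed.

Fixpoint weak_compositions (c s : nat) : seq (seq nat) :=
  if c is c'.+1 then
    [seq x :: r | x <- iota 0 s.+1, r <- weak_compositions c' (s - x)]
  else if s is 0 then [:: [::]] else [::].

Lemma mem_weak_compositions c s r :
  (r \in weak_compositions c s) = (size r == c) && (sumn r == s).
Proof.
elim: c s r => [|c IHc] s r; first by case: s; case: r.
apply/allpairsPdep/idP => [[x [r' [+ + ->]]]|].
  rewrite mem_iota -/(weak_compositions c (s - x)) IHc /=.
  by move=> hx /andP[/eqP-> /eqP->]; apply/eqP; lia.
case: r => [|x r] /andP[/eqP // [hr] /eqP hs]; rewrite /= in hs.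
exists x, r; rewrite mem_iota -/(weak_compositions c (s - x)) IHc hr /=.
by split => //; apply/eqP; lia.
Qed.

Lemma weak_compositions_uniq c s : uniq (weak_compositions c s).
Proof.
elim: c s => [|c IHc] s; first by case: s.
apply: allpairs_uniq_dep => [|x _|[x r] [x' r'] _ _ /= [-> ->]] //.
exact: iota_uniq.
Qed.

Lemma size_weak_compositions c s : size (weak_compositions c s) = multichoose c s.
Proof.
elim: c s => [|c IHc] s; first by case: s => [|s]; rewrite ?multichoose_0S.
rewrite size_allpairs_dep -[c.+1]/(1 + c) -multichoose_Vandermonde.
rewrite sumnE big_map -[iota 0 s.+1]/(index_iota 0 s.+1) big_mkord.
by apply: eq_bigr => x _; rewrite IHc multichoose_1n mul1n.
Qed.

Lemma flatten_map_uniq (S T : eqType) (s : seq S) (g : S -> seq T) (key : T -> S) :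
  uniq s -> (forall x, uniq (g x)) -> (forall x e, e \in g x -> key e = x) ->
  uniq (flatten [seq g x | x <- s]).
Proof.
move=> + g_uniq g_key; elim: s => [|x s IHs] //= /andP[xNs s_uniq].
rewrite cat_uniq g_uniq IHs // andbT; apply/hasPn => e /flatten_mapP[x' x's ex'].
by apply: contra xNs => ex; rewrite -(g_key _ _ ex) (g_key _ _ ex').
Qed.

(* With L = [(c_1, a_1); ...], the sequences y with y_i in N^{c_i} whose prefix
   sums never exceed b plus the prefix sums of the a_i. *)
Fixpoint fillings (L : seq (nat * nat)) (b : nat) : seq (seq (seq nat)) :=
  if L is (c, a) :: L' then
    flatten [seq [seq x :: y | x <- weak_compositions c s, y <- fillings L' (b + a - s)]
            | s <- iota 0 (b + a).+1]
  else [:: [::]].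

Lemma size_fillings_cons c a L b :
  size (fillings ((c, a) :: L) b) =
  \sum_(s < (b + a).+1) multichoose c s * size (fillings L (b + a - s)).
Proof.
rewrite size_flatten /shape -map_comp sumnE big_map.
rewrite -[iota 0 _]/(index_iota 0 (b + a).+1) big_mkord.
by apply: eq_bigr => s _; rewrite /= size_allpairs size_weak_compositions.
Qed.

Lemma mem_fillings_cons c a L b y :
  (y \in fillings ((c, a) :: L) b) =
  if y is x :: y' then
    [&& size x == c, sumn x <= b + a & y' \in fillings L (b + a - sumn x)]
  else false.
Proof.
apply/flatten_mapP/idP => [[s] | ].
  rewrite mem_iota => /andP[_ hs] /allpairsP[[x y'] /= [+ hy' ->]].
  by rewrite mem_weak_compositions => /andP[-> /eqP->]; rewrite -ltnS hs hy'.
case: y => [|x y'] // /and3P[hx hs hy']; exists (sumn x); first by rewrite mem_iota.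
by apply/allpairsP; exists (x, y'); rewrite mem_weak_compositions hx eqxx.
Qed.

Lemma fillings_uniq L b : uniq (fillings L b).
Proof.
elim: L b => [|[c a] L IHL] b //.
apply: (@flatten_map_uniq _ _ _ _ (fun y => sumn (head [::] y))) => [|s|s y].
- exact: iota_uniq.
- apply: allpairs_uniq => [||[x y] [x' y'] _ _ /= [-> ->]] //.
  exact: weak_compositions_uniq.
- by case/allpairsP => -[x y'] [+ _ ->]; rewrite mem_weak_compositions => /andP[_ /eqP].
Qed.

Lemma mem_fillingsP L b y :
  y \in fillings L b <->
  map size y = unzip1 L /\
  forall k, k <= size L -> sumn (take k (map sumn y)) <= b + sumn (take k (unzip2 L)).
Proof.
elim: L b y => [|[c a] L IHL] b [|x y]; rewrite ?mem_fillings_cons //=.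
- by rewrite inE; split=> // -[].
- by split=> // -[].
split=> [/and3P[/eqP-> hs /IHL[-> hk]] | [[hx hy] hk]].
  by split=> // -[|k] //= /hk; lia.
have hs : sumn x <= b + a by move: (hk 1 isT); rewrite /= !take0 /= !addn0.
rewrite hx eqxx hs; apply/IHL; split=> // k /(hk k.+1) /=; lia.
Qed.

Lemma sumn_take s k : sumn (take k s) = \sum_(i < k) nth 0 s i.
Proof.
elim: s k => [|x s IHs] [|k] /=; rewrite ?big_ord0 //.
  by rewrite big1 // => i _; rewrite nth_nil.
by rewrite big_ord_recl IHs.
Qed.

Lemma prefix_conservation (g o s : nat -> nat) m :
  (forall k, k < m -> g k + o k = (if k is k'.+1 then g k' else 0) + s k) <->
  (forall k, k < m -> g k + \sum_(i < k.+1) o i = \sum_(i < k.+1) s i).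
Proof.
split=> h.
  elim=> [|k IHk] hk; first by rewrite !big_ord1 (h 0 hk).
  by have := h k.+1 hk; have := IHk (ltnW hk); rewrite !(big_ord_recr k.+1) /=; lia.
case=> [|k] hk; first by have := h 0 hk; rewrite !big_ord1.
by have := h k.+1 hk; have := h k (ltnW hk); rewrite !(big_ord_recr k.+1) /=; lia.
Qed.

Lemma nth_map_enum m (F : 'I_m -> nat) (k : 'I_m) :
  nth 0 [seq F i | i <- enum 'I_m] k = F k.
Proof. by rewrite (nth_map k) ?size_enum_ord // nth_ord_enum. Qed.

Section PiFlows.
Variables (n : nat) (c s : 'I_n.+1 -> nat).

Definition Pi_profile : seq (nat * nat) := [seq (c i, s i) | i <- enum 'I_n.+1].

Definition path_values (f : {ffun Pi_edge c -> nat}) : seq nat :=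
  [seq f (inl i) | i <- enum 'I_n.+1].

Definition extra_values (f : {ffun Pi_edge c -> nat}) : seq (seq nat) :=
  [seq [seq f (inr (Tagged (fun i => 'I_(c i)) j)) | j <- enum 'I_(c i)]
  | i <- enum 'I_n.+1].

Definition flow_of_extra_values (y : seq (seq nat)) : {ffun Pi_edge c -> nat} :=
  [ffun e : Pi_edge c => match e with
             | inl k => sumn (take k.+1 (unzip2 Pi_profile)) - sumn (take k.+1 (map sumn y))
             | inr e => nth 0 (nth [::] y (tag e)) (tagged e)
             end].

Lemma nth_extra_values f (i : 'I_n.+1) :
  nth [::] (extra_values f) i =
  [seq f (inr (Tagged (fun i => 'I_(c i)) j)) | j <- enum 'I_(c i)].
Proof. by rewrite (nth_map i) ?size_enum_ord // nth_ord_enum. Qed.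

Lemma map_size_extra_values f : map size (extra_values f) = unzip1 Pi_profile.
Proof.
by rewrite /unzip1 -!map_comp; apply: eq_map => i /=; rewrite size_map size_enum_ord.
Qed.

Lemma nth_sumn_extra_values f (i : 'I_n.+1) :
  nth 0 (map sumn (extra_values f)) i = \sum_(e : extra_edge c | tag e == i) f (inr e).
Proof.
rewrite -map_comp nth_map_enum /= sumnE big_map big_enum /=.
transitivity (\sum_(i' | i' == i) \sum_(j : 'I_(c i')) f (inr (Tagged (fun i => 'I_(c i)) j))).
  by rewrite big_pred1_eq.
rewrite (sig_big_dep _ (fun _ _ => true)).
by apply: eq_big => [[i' j]|[i' j] _] //=; rewrite andbT.
Qed.

Lemma inflow_path_values (f : {ffun Pi_edge c -> nat}) (k : 'I_n.+1) :
  \sum_(e : 'I_n.+1 | e.+1 == k :> nat) f (inl e) =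
  if (k : nat) is k'.+1 then nth 0 (path_values f) k' else 0.
Proof.
case: k => [[|k] hk] /=; first by rewrite big_pred0.
rewrite (big_pred1 (Ordinal (ltnW hk))) => [|e].
  by rewrite /path_values (nth_map_enum _ (Ordinal (ltnW hk))).
by rewrite /= eqSS; apply/eqP/eqP => [|->] // ek; apply: val_inj.
Qed.

Lemma is_int_flowP f :
  is_int_flow s f <->
  forall k : 'I_n.+1,
    f (inl k) + sumn (take k.+1 (map sumn (extra_values f))) =
    sumn (take k.+1 (unzip2 Pi_profile)).
Proof.
pose g := nth 0 (path_values f).
pose o := nth 0 (map sumn (extra_values f)).
pose a := nth 0 (unzip2 Pi_profile).
have gE (k : 'I_n.+1) : f (inl k) = g k by rewrite /g nth_map_enum.
have oE (k : 'I_n.+1) : \sum_(e | tag e == k) f (inr e) = o k.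
  by rewrite /o nth_sumn_extra_values.
have aE (k : 'I_n.+1) : s k = a k by rewrite /a /unzip2 -map_comp nth_map_enum.
transitivity (forall k, k < n.+1 -> g k + o k = (if k is k'.+1 then g k' else 0) + a k).
  split=> h k => [hk|]; last by have := h k (ltn_ord k); rewrite gE oE aE inflow_path_values.
  by have := h (Ordinal hk); rewrite gE oE aE inflow_path_values.
rewrite prefix_conservation; split=> h k => [|hk].
  by have := h k (ltn_ord k); rewrite gE !sumn_take.
by have := h (Ordinal hk); rewrite gE !sumn_take.
Qed.

Lemma extra_valuesK y :
  map size y = unzip1 Pi_profile -> extra_values (flow_of_extra_values y) = y.
Proof.
move=> y_size; have size_y : size y = n.+1.
  by rewrite -(size_map size) y_size size_map size_map size_enum_ord.
apply: (@eq_from_nth _ [::]) => [|i]; first by rewrite size_map size_enum_ord size_y.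
rewrite size_map size_enum_ord => hi; rewrite (nth_extra_values _ (Ordinal hi)) /=.
have size_yi : size (nth [::] y i) = c (Ordinal hi).
  move/(congr1 (nth 0 ^~ i)): y_size; rewrite (nth_map [::]) ?size_y //.
  by rewrite /unzip1 -map_comp (nth_map_enum _ (Ordinal hi)).
rewrite -[RHS](mkseq_nth 0) size_yi /mkseq -val_enum_ord -map_comp.
by apply: eq_map => j; rewrite /= ffunE.
Qed.

Lemma K_Pi_fillings : K_Pi c s (size (fillings Pi_profile 0)).
Proof.
exists (map flow_of_extra_values (fillings Pi_profile 0)); split; last exact: size_map.
  rewrite map_inj_in_uniq ?fillings_uniq // => y y' /mem_fillingsP[y_size _].
  move=> /mem_fillingsP[y'_size _] eq_flows.
  by rewrite -(extra_valuesK y_size) -(extra_valuesK y'_size) eq_flows.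
move=> f; split=> [/mapP[y /mem_fillingsP[y_size y_le] ->] | /is_int_flowP f_flow].
  apply/is_int_flowP => k; rewrite extra_valuesK // ffunE subnK //.
  by rewrite -[X in _ <= X]add0n y_le // size_map size_enum_ord.
apply/mapP; exists (extra_values f).
  apply/mem_fillingsP; split=> [|[|k]]; [exact: map_size_extra_values | by rewrite !take0 |].
  rewrite size_map size_enum_ord add0n => hk.
  by rewrite -(f_flow (Ordinal hk)) leq_addl.
apply/ffunP => -[k|e]; rewrite ffunE /=; first by rewrite -(f_flow k) addnK.
by rewrite nth_extra_values (nth_map (tagged e)) ?size_enum_ord // nth_ord_enum; case: e.
Qed.

End PiFlows.

Local Open Scope ring_scope.

Local Notation nonneg := Num.Def.nneg_num_pred.

Section PositiveCoefficients.
Variable R : numDomainType.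
Implicit Types p q : {poly R}.

Definition coef_pos_upto (d : nat) p := forall i, (i <= d)%N -> 0 < p`_i.

Lemma coef_pos_uptoM m n p q :
  p \is a polyOver nonneg -> q \is a polyOver nonneg ->
  coef_pos_upto m p -> coef_pos_upto n q -> coef_pos_upto (m + n) (p * q).
Proof.
move=> /polyOverP p_ge0 /polyOverP q_ge0 p_gt0 q_gt0 i le_i_mn.
have le_j_i : (minn i m < i.+1)%N by rewrite ltnS geq_minl.
rewrite coefM (bigD1 (Ordinal le_j_i)) //=.
apply: ltr_wpDr.
  by apply: sumr_ge0 => j _; apply: mulr_ge0; [exact: p_ge0 | exact: q_ge0].
by rewrite mulr_gt0 ?p_gt0 ?q_gt0 //; lia.
Qed.

Lemma coef_pos_uptoDr d p q :
  coef_pos_upto d p -> q \is a polyOver nonneg -> coef_pos_upto d (p + q).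
Proof.
by move=> p_gt0 /polyOverP q_ge0 i le_id; rewrite coefD ltr_wpDr ?p_gt0 //; exact: q_ge0.
Qed.

End PositiveCoefficients.

Section MultichoosePoly.
Variable R : numFieldType.

Definition multichoose_poly (a u d : nat) : {poly R} :=
  (d`!%:R)^-1 *: \prod_(r < d) (a%:R *: 'X + (u + r)%N%:R%:P).

Lemma linear_poly_nneg (a w : nat) : a%:R *: 'X + w%:R%:P \is a polyOver (@nonneg R).
Proof. by rewrite rpredD ?polyOverC ?polyOverZ ?polyOverX ?rpred_nat. Qed.

Lemma size_linear_poly (a w : nat) : (size (a%:R *: 'X + w%:R%:P : {poly R})%R <= 2)%N.
Proof.
apply: leq_trans (size_polyD _ _) _; rewrite geq_max (leq_trans (size_polyC_leq1 _)) //.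
by rewrite (leq_trans (size_scale_leq _ _)) ?size_polyX.
Qed.

Lemma multichoose_poly0 a u : multichoose_poly a u 0 = 1.
Proof. by rewrite /multichoose_poly big_ord0 fact0 invr1 scale1r. Qed.

Lemma multichoose_poly_nneg a u d : multichoose_poly a u d \is a polyOver nonneg.
Proof.
rewrite polyOverZ ?rpredV ?rpred_nat //.
by apply: rpred_prod => r _; exact: linear_poly_nneg.
Qed.

Lemma size_multichoose_poly a u d : (size (multichoose_poly a u d) <= d.+1)%N.
Proof.
apply: leq_trans (size_scale_leq _ _) _.
elim: d => [|d IHd]; first by rewrite big_ord0 size_poly1.
rewrite big_ord_recr /=; apply: leq_trans (size_polyMleq _ _) _.
move: IHd (size_linear_poly a (u + d)).
by set p := \prod_(r < d) _; set q := _ *: 'X + _; lia.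
Qed.

Lemma size_mul_multichoose_poly (p : {poly R}) a u d n :
  (size p <= n.+1)%N -> (size (p * multichoose_poly a u d)%R <= (n + d).+1)%N.
Proof.
move=> size_p; apply: leq_trans (size_polyMleq _ _) _.
by move: size_p (size_multichoose_poly a u d); set q := size (multichoose_poly _ _ _); lia.
Qed.

Lemma horner_multichoose_poly a u d (t : nat) :
  (multichoose_poly a u d).[t%:R] = (multichoose (t * a + u) d)%:R.
Proof.
have fact_neq0 : d`!%:R != 0 :> R by rewrite pnatr_eq0 -lt0n fact_gt0.
rewrite hornerZ horner_prod; apply: (mulfI fact_neq0).
rewrite mulrA mulfV // mul1r -natrM mulnC multichoose_fact natr_prod.
apply: eq_bigr => r _.
by rewrite hornerD hornerZ hornerX hornerC -natrM -natrD mulnC addnA.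
Qed.

Lemma linear_poly_pos (a w : nat) :
  (0 < a)%N -> (0 < w)%N -> coef_pos_upto 1 (a%:R *: 'X + w%:R%:P : {poly R}).
Proof.
move=> a_gt0 w_gt0 [|[|]] // _; rewrite coefD coefZ coefX coefC /=.
  by rewrite mulr0 add0r ltr0n.
by rewrite mulr1 addr0 ltr0n.
Qed.

Lemma multichoose_poly_pos a u d :
  (0 < a)%N -> (0 < u)%N -> coef_pos_upto d (multichoose_poly a u d).
Proof.
move=> a_gt0 u_gt0.
have : coef_pos_upto d (\prod_(r < d) (a%:R *: 'X + (u + r)%N%:R%:P : {poly R})).
  elim: d => [|d IHd]; first by case=> // _; rewrite big_ord0 coef1.
  rewrite big_ord_recr /= -addn1; apply: coef_pos_uptoM IHd _.
  - by apply: rpred_prod => r _; exact: linear_poly_nneg.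
  - exact: linear_poly_nneg.
  - by apply: linear_poly_pos; rewrite ?addn_gt0 ?u_gt0.
by move=> prod_gt0 i le_id; rewrite coefZ mulr_gt0 ?prod_gt0 // invr_gt0 ltr0n fact_gt0.
Qed.

End MultichoosePoly.

Section Expansion.
Variable R : numFieldType.

Definition scale_supplies (t : nat) (L : seq (nat * nat)) : seq (nat * nat) :=
  [seq (p.1, t * p.2)%N | p <- L].

Definition fillings_expansion (L : seq (nat * nat)) (Q : nat -> {poly R}) (top : nat) :=
  [/\ Q top = 1, forall j, Q j \is a polyOver nonneg,
      forall j, (j <= top)%N -> (size (Q j) <= (top - j).+1)%N &
      forall t b, (size (fillings (scale_supplies t L) b))%:R =
                  \sum_(j < top.+1) (Q j).[t%:R] * (multichoose j.+1 b)%:R].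

Lemma size_fillings_cons_expansion c a L top (q : 'I_top.+1 -> R) b :
  (forall b, (size (fillings L b))%:R = \sum_(j < top.+1) q j * (multichoose j.+1 b)%:R) ->
  (size (fillings ((c, a) :: L) b))%:R =
  \sum_(j < top.+1) q j * (multichoose (b + a).+1 (c + j))%:R.
Proof.
move=> L_exp; rewrite size_fillings_cons natr_sum.
under eq_bigr => s _ do rewrite natrM L_exp mulr_sumr.
rewrite exchange_big /=; apply: eq_bigr => j _.
rewrite [in RHS]multichooseC -[(c + j).+1]addnS -multichoose_Vandermonde natr_sum mulr_sumr.
by apply: eq_bigr => s _; rewrite natrM mulrCA.
Qed.

Lemma multichoose_shift_expansion a b d (t : nat) :
  (multichoose (b + t * a).+1 d)%:R =
  \sum_(i < d.+1) (multichoose_poly R a 0 (d - i)).[t%:R] * (multichoose i.+1 b)%:R.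
Proof.
rewrite -addSn -multichoose_Vandermonde natr_sum; apply: eq_bigr => i _.
by rewrite horner_multichoose_poly addn0 multichooseC natrM mulrC.
Qed.

Lemma fillings_expansion_cons L Q top c a :
  fillings_expansion L Q top ->
  fillings_expansion ((c, a) :: L)
    (fun i => \sum_(j < top.+1 | (i <= c + j)%N) Q j * multichoose_poly R a 0 (c + j - i))
    (top + c).
Proof.
case=> Q_top Q_nneg Q_size Q_exp; split.
- rewrite (big_pred1 ord_max) => [|j].
    by rewrite Q_top mul1r addnC subnn multichoose_poly0.
  apply/idP/eqP => [|-> /=]; last by rewrite addnC.
  by move=> le_top; apply: val_inj => /=; have := ltn_ord j; lia.
- by move=> i; apply: rpred_sum => j _; rewrite rpredM ?multichoose_poly_nneg.
- move=> i le_i; apply: leq_trans (size_sum _ _ _) _; apply/bigmax_leqP => j le_ij.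
  apply: leq_trans (size_mul_multichoose_poly _ _ _ (Q_size j (ltn_ord j))) _.
  by have := ltn_ord j; lia.
move=> t b; rewrite -[scale_supplies t _]/((c, t * a)%N :: scale_supplies t L).
rewrite (size_fillings_cons_expansion _ _ _ (Q_exp t)).
transitivity (\sum_(j < top.+1) \sum_(i < (top + c).+1 | (i <= c + j)%N)
  (Q j).[t%:R] * ((multichoose_poly R a 0 (c + j - i)).[t%:R] * (multichoose i.+1 b)%:R)).
  apply: eq_bigr => j _; rewrite multichoose_shift_expansion mulr_sumr.
  rewrite (big_ord_widen (top + c).+1 (fun i => (Q j).[t%:R] *
    ((multichoose_poly R a 0 (c + j - i)).[t%:R] * (multichoose i.+1 b)%:R))) //.
  by have := ltn_ord j; lia.
rewrite (exchange_big_dep xpredT) //; apply: eq_bigr => i _.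
by rewrite horner_sum mulr_suml; apply: eq_bigr => j _; rewrite hornerM mulrA.
Qed.

Lemma fillings_expansion_exists L : exists Q top, fillings_expansion L Q top.
Proof.
elim: L => [|[c a] L [Q [top /fillings_expansion_cons]]]; last by eauto.
exists (fun=> 1), 0%N; split=> [|j|j _|t b] //; first exact: rpred1.
  by rewrite size_poly1.
by rewrite big_ord1 hornerC mul1r multichoose_1n.
Qed.

Lemma fillings_ehrhart_pos L :
  exists p : {poly R},
    (forall t, p.[t%:R] = (size (fillings (scale_supplies t L) 0))%:R) /\
    (forall i, (i < size p)%N -> 0 < p`_i).
Proof.
elim: L => [|[c a] L IHL].
  exists 1; split=> [t|i]; first by rewrite hornerC.
  by rewrite size_poly1; case: i => // _; rewrite coef1 ltr01.
have [a0 | a_gt0] := posnP a.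
  have [p [p_eval p_pos]] := IHL; exists p; split=> // t.
  by rewrite p_eval /= size_fillings_cons a0 muln0 big_ord1 multichoose_n0 mul1n.
have [Q [top [Q_top Q_nneg Q_size Q_exp]]] := fillings_expansion_exists L.
exists (\sum_(j < top.+1) Q j * multichoose_poly R a 1 (c + j)); split=> [t|i].
  rewrite -[scale_supplies t _]/((c, t * a)%N :: scale_supplies t L).
  rewrite (size_fillings_cons_expansion _ _ _ (Q_exp t)) horner_sum.
  by apply: eq_bigr => j _; rewrite hornerM horner_multichoose_poly add0n addn1.
have size_p :
    (size (\sum_(j < top.+1) Q j * multichoose_poly R a 1 (c + j))%R <= (top + c).+1)%N.
  apply: leq_trans (size_sum _ _ _) _; apply/bigmax_leqP => j _.
  apply: leq_trans (size_mul_multichoose_poly _ _ _ (Q_size j (ltn_ord j))) _.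
  by have := ltn_ord j; lia.
move=> /leq_trans/(_ size_p); rewrite ltnS addnC => le_i.
rewrite (bigD1 ord_max) //= Q_top mul1r; apply: coef_pos_uptoDr le_i.
  exact: multichoose_poly_pos.
by apply: rpred_sum => j _; rewrite rpredM ?multichoose_poly_nneg.
Qed.

End Expansion.

Theorem corollary6p20 (n : nat) (c : 'I_(n.+1) -> nat) (a : 'I_(n.+1) -> nat) :
  exists p : {poly rat},
    (forall t : nat, exists N : nat,
        K_Pi c (fun k => (t * a k)%N) N /\ p.[t%:R] = N%:R) /\
    (forall i : nat, (i < size p)%N -> 0 < p`_i).
Proof.
have [p [p_eval p_pos]] := fillings_ehrhart_pos rat [seq (c i, a i) | i <- enum 'I_n.+1].
exists p; split=> // t; exists (size (fillings (Pi_profile c (fun k => t * a k)%N) 0)).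
by split; [exact: K_Pi_fillings | rewrite p_eval /scale_supplies -map_comp].
Qed.
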